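(* Let $M,N,Q$ be positive integers with $M\ge 2N$, let $S=\{\vec b\in\mathbb{F}_2^M: H(\vec b)=N\}$, and let $\mathbf{G}\in\mathbb{F}_2^{Q\times M}$ be such that the map $\vec b\mapsto\mathbf{G}\vec b$ (over $\mathbb{F}_2$) is injective on $S$. Then every nonzero $\vec k\in\ker\mathbf{G}$ whose Hamming weight $H(\vec k)$ is even satisfies $H(\vec k)\ge 2N+2$.
   Context: $H(\vec v)$ denotes the Hamming weight (number of nonzero entries) of a binary vector $\vec v$; $\ker\mathbf{G}=\{\vec k\in\mathbb{F}_2^M:\mathbf{G}\vec k=\vec 0\}$. A matrix $\mathbf{G}$ injective on $S$ is called a number-conserving linear encoding of $M$ fermionic modes with $N$ particles. *)

From mathcomp Require Import all_boot all_order all_algebra.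
Set Implicit Arguments. Unset Strict Implicit. Unset Printing Implicit Defensive.
Import GRing.Theory.
Local Open Scope ring_scope.

Definition hweight (M : nat) (v : 'cV['F_2]_M) : nat :=
  #|[set i : 'I_M | v i 0 != 0]|.

Definition weightN (M N : nat) : {set 'cV['F_2]_M} :=
  [set b | hweight b == N].

Definition injective_on_S (Q M : nat) (N : nat) (G : 'M['F_2]_(Q, M)) : Prop :=
  {in weightN M N &, injective (fun b : 'cV['F_2]_M => G *m b)}.

(* If a nonzero kernel vector k had even weight 2h <= 2N, split its support
   into two halves A and B of size h and pad both with a common set C of N - h
   positions outside the support (there is room since M >= 2N). The indicator
   vectors of A + C and B + C both have weight N and differ exactly by k, so G
   maps them to the same vector, contradicting injectivity on S. *)

From mathcomp Require Import all_boot all_order all_algebra.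
From mathcomp Require Import zify.
Set Implicit Arguments.
Unset Strict Implicit.
Unset Printing Implicit Defensive.
Import GRing.Theory.
Local Open Scope ring_scope.

Lemma subset_of_card (T : finType) (B : {set T}) n :
  (n <= #|B|)%N -> exists2 A : {set T}, A \subset B & #|A| = n.
Proof.
case/card_geqP=> s [uniq_s <- sB]; exists [set x in s].
  by apply/subsetP=> x; rewrite inE; apply: sB.
by rewrite cardsE (card_uniqP uniq_s).
Qed.

Lemma cardsU_disjoint (T : finType) (A B : {set T}) :
  [disjoint A & B] -> #|A :|: B| = (#|A| + #|B|)%N.
Proof. by move=> dAB; apply/eqP; rewrite (leq_card_setU A B).2. Qed.

Section F2Vectors.

Variable M : nat.

Definition supp (v : 'cV['F_2]_M) : {set 'I_M} := [set i | v i 0 != 0].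

Definition col_of_set (X : {set 'I_M}) : 'cV['F_2]_M := \col_i (i \in X)%:R.

Lemma supp_col_of_set X : supp (col_of_set X) = X.
Proof. by apply/setP=> i; rewrite !inE mxE; case: (i \in X). Qed.

Lemma hweight_col_of_set X : hweight (col_of_set X) = #|X|.
Proof. by rewrite /hweight -/(supp _) supp_col_of_set. Qed.

Lemma col_of_set_supp v : col_of_set (supp v) = v.
Proof.
apply/matrixP=> i j; rewrite ord1 !mxE inE.
by case: (v i 0) => [[|[|n]] //= lt_n2]; apply: val_inj.
Qed.

Lemma col_of_setB X Y :
  col_of_set X - col_of_set Y = col_of_set ((X :\: Y) :|: (Y :\: X)).
Proof.
apply/matrixP=> i j; rewrite !mxE !inE.
by case: (i \in X); case: (i \in Y); apply: val_inj.
Qed.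

Lemma split_even_weight N (k : 'cV['F_2]_M) :
  (2 * N <= M)%N -> ~~ odd (hweight k) -> (hweight k <= 2 * N)%N ->
  exists b1 b2, [/\ b1 \in weightN M N, b2 \in weightN M N & k = b1 - b2].
Proof.
move=> le2NM even_k le_k2N; set K := supp k; set h := #|K|./2.
have wK : hweight k = #|K| by [].
rewrite wK in even_k le_k2N.
have [A sAK cardA] : exists2 A : {set 'I_M}, A \subset K & #|A| = h.
  by apply: subset_of_card; lia.
have [C sCK cardC] : exists2 C : {set 'I_M}, C \subset ~: K & #|C| = (N - h)%N.
  by apply: subset_of_card; move: (cardsC K); rewrite card_ord; lia.
have dCK : [disjoint C & K] by rewrite disjoints_subset.
have cardKA : #|K :\: A| = h.
  by move: (cardsD K A); rewrite (setIidPr sAK) cardA; lia.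
exists (col_of_set (A :|: C)), (col_of_set (K :\: A :|: C)); split.
- rewrite inE hweight_col_of_set cardsU_disjoint ?cardA ?cardC; last first.
    by rewrite disjoint_sym (disjointWr sAK dCK).
  by apply/eqP; lia.
- rewrite inE hweight_col_of_set cardsU_disjoint ?cardKA ?cardC; last first.
    by rewrite disjoint_sym (disjointWr (subsetDl K A) dCK).
  by apply/eqP; lia.
rewrite col_of_setB -[LHS]col_of_set_supp; congr col_of_set.
apply/setP=> i; rewrite !(in_setD, in_setU).
have /implyP := subsetP sAK i; have /implyP := subsetP sCK i; rewrite in_setC.
by case: (i \in A); case: (i \in C); case: (i \in K).
Qed.

End F2Vectors.

Theorem lemma1 (M N Q : nat) (G : 'M['F_2]_(Q, M)) :
  (0 < M)%N -> (0 < N)%N -> (0 < Q)%N -> (2 * N <= M)%N ->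
  injective_on_S N G ->
  forall k : 'cV['F_2]_M, G *m k = 0 -> k != 0 -> ~~ odd (hweight k) ->
  (2 * N + 2 <= hweight k)%N.
Proof.
move=> _ _ _ le2NM injG k Gk0 nz_k even_k.
rewrite leqNgt; apply: contra nz_k => lt_k.
have le_k2N : (hweight k <= 2 * N)%N by lia.
have [b1 [b2 [Sb1 Sb2 def_k]]] := split_even_weight le2NM even_k le_k2N.
rewrite def_k subr_eq0; apply/eqP/injG => //=.
by apply/eqP; rewrite -subr_eq0 -mulmxBr -def_k Gk0.
Qed.
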